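(* Let $\mathbf{A}$ be a Mal'cev algebra with universe $\{0,1,2\}$. If $\mu$ is a congruence of $\mathbf{A}$ different from $0_A$ and $1_A$, then $\mu$ is the only such congruence of $\mathbf{A}$.
   Context: A Mal'cev algebra is an algebra with a term operation $d$ satisfying $d(y,x,x)\approx d(x,x,y)\approx y$. $0_A$ denotes the equality relation and $1_A=A^2$. *)

From mathcomp Require Import all_boot all_order.
Set Implicit Arguments. Unset Strict Implicit. Unset Printing Implicit Defensive.

Record algebra (A : Type) := Algebra {
  op_idx : Type;
  arity : op_idx -> nat;
  op : forall f : op_idx, ('I_(arity f) -> A) -> A
}.

Inductive term_op (A : Type) (Alg : algebra A) (n : nat) :
  (('I_n -> A) -> A) -> Prop :=
| term_proj (i : 'I_n) : term_op Alg (fun x => x i)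
| term_app (f : op_idx Alg) (gs : 'I_(arity f) -> (('I_n -> A) -> A)) :
    (forall k, term_op Alg (gs k)) ->
    term_op Alg (fun x => @op A Alg f (fun k => gs k x)).

Definition trip (A : Type) (a b c : A) : 'I_3 -> A :=
  fun i => nth a [:: a; b; c] i.

Definition malcev (A : Type) (Alg : algebra A) : Prop :=
  exists d, term_op Alg (n := 3) d /\
    forall x y : A, d (trip y x x) = y /\ d (trip x x y) = y.

Definition congruence (A : Type) (Alg : algebra A) (mu : A -> A -> Prop) : Prop :=
  (forall x, mu x x) /\ (forall x y, mu x y -> mu y x) /\
  (forall x y z, mu x y -> mu y z -> mu x z) /\
  (forall (f : op_idx Alg) (a b : 'I_(arity f) -> A),
      (forall k, mu (a k) (b k)) -> mu (@op A Alg f a) (@op A Alg f b)).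

(* 0_A (equality) and 1_A (all pairs), compared extensionally *)
Definition is_zero_rel (A : Type) (mu : A -> A -> Prop) : Prop :=
  forall x y, mu x y <-> x = y.
Definition is_one_rel (A : Type) (mu : A -> A -> Prop) : Prop :=
  forall x y, mu x y.

From mathcomp Require Import all_boot all_order.
From Stdlib Require Import Classical.
Set Implicit Arguments. Unset Strict Implicit.

(* A Mal'cev term makes any two congruences permute: from [p mu q nu r] the
   element [d(p,q,r)] satisfies [p nu d(p,q,r) mu r].  On a three-element
   set, a congruence other than 0 and 1 has exactly one two-element class.
   If [nu x y] but not [mu x y] while [mu] has a class [{q, x}], then
   [q mu x nu y] permutes to [q nu w mu y]; [w] can be neither [q] nor [x]
   (either would give [mu x y]), so [w = y] and [nu] links all three
   elements, i.e. [nu] is 1.  Hence every congruence other than 1 is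
   contained in every congruence other than 0, and two congruences
   different from both coincide. *)

Section Congruences.

Variables (A : Type) (Alg : algebra A).

Lemma congruence_refl (mu : A -> A -> Prop) :
  congruence Alg mu -> forall x, mu x x.
Proof. by case. Qed.

Lemma congruence_sym (mu : A -> A -> Prop) :
  congruence Alg mu -> forall x y, mu x y -> mu y x.
Proof. by case=> _ []. Qed.

Lemma congruence_trans (mu : A -> A -> Prop) :
  congruence Alg mu -> forall x y z, mu x y -> mu y z -> mu x z.
Proof. by case=> _ [_ []]. Qed.

Lemma congruence_term_op (mu : A -> A -> Prop) n (t : ('I_n -> A) -> A) :
  congruence Alg mu -> term_op Alg t ->
  forall a b, (forall i, mu (a i) (b i)) -> mu (t a) (t b).
Proof.
move=> [_ [_ [_ mu_op]]]; elim=> [i | f gs _ IHgs] a b mu_ab /=.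
  exact: mu_ab.
by apply: mu_op => k; apply: IHgs.
Qed.

Lemma trip_rel (mu : A -> A -> Prop) p q r p' q' r' :
  mu p p' -> mu q q' -> mu r r' -> forall i, mu (trip p q r i) (trip p' q' r' i).
Proof. by move=> ? ? ? [[|[|[|i]]] ?]. Qed.

Lemma malcev_congruence_permute (mu nu : A -> A -> Prop) :
  malcev Alg -> congruence Alg mu -> congruence Alg nu ->
  forall p q r, mu p q -> nu q r -> exists2 w, nu p w & mu w r.
Proof.
move=> [d [term_d d_id]] Cmu Cnu p q r mu_pq nu_qr.
exists (d (trip p q r)).
- have d_pqq : d (trip p q q) = p by case: (d_id q p).
  rewrite -[X in nu X _]d_pqq; apply: (congruence_term_op Cnu term_d).
  exact: trip_rel (congruence_refl Cnu p) (congruence_refl Cnu q) nu_qr.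
- have d_qqr : d (trip q q r) = r by case: (d_id q r).
  rewrite -[X in mu _ X]d_qqr; apply: (congruence_term_op Cmu term_d).
  exact: trip_rel mu_pq (congruence_refl Cmu q) (congruence_refl Cmu r).
Qed.

End Congruences.

Lemma nonzero_rel_pair (T : eqType) (mu : T -> T -> Prop) :
  (forall x, mu x x) -> ~ is_zero_rel mu -> exists p q, p != q /\ mu p q.
Proof.
move=> mu_refl not_zero; apply: NNPP => no_pair; apply: not_zero => x y.
split=> [mu_xy | ->]; last exact: mu_refl.
by case: (eqVneq x y) => // x_neq_y; case: no_pair; exists x, y.
Qed.

Lemma ord3_cases (a b c w : 'I_3) : a != b -> a != c -> b != c ->
  [|| w == a, w == b | w == c].
Proof.
by move: a b c w => [[|[|[|?]]] ?] [[|[|[|?]]] ?] [[|[|[|?]]] ?] [[|[|[|?]]] ?].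
Qed.

Lemma ord3_pairs_meet (x y p q : 'I_3) : x != y -> p != q ->
  [|| p == x, p == y, q == x | q == y].
Proof.
by move: x y p q => [[|[|[|?]]] ?] [[|[|[|?]]] ?] [[|[|[|?]]] ?] [[|[|[|?]]] ?].
Qed.

Section ThreeElements.

Variables (Alg : algebra 'I_3) (mu nu : 'I_3 -> 'I_3 -> Prop).
Hypotheses (malcev_Alg : malcev Alg)
  (Cmu : congruence Alg mu) (Cnu : congruence Alg nu).

Lemma ord3_congruence_total a b c : a != b -> a != c -> b != c ->
  nu a c -> nu b c -> is_one_rel nu.
Proof.
move=> ab ac bc nu_ac nu_bc.
have nu_c x : nu x c.
  case/or3P: (ord3_cases x ab ac bc) => /eqP ->; [exact: nu_ac | exact: nu_bc |].
  exact: congruence_refl Cnu c.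
by move=> x y; exact: (congruence_trans Cnu (nu_c x) (congruence_sym Cnu (nu_c y))).
Qed.

Lemma ord3_congruence_cross_one q x y :
  q != x -> mu q x -> nu x y -> ~ mu x y -> is_one_rel nu.
Proof.
move=> qx mu_qx nu_xy not_mu_xy.
have mu_xq := congruence_sym Cmu mu_qx.
have xy : x != y.
  by apply/eqP => xy; apply: not_mu_xy; rewrite xy; exact: congruence_refl Cmu y.
have qy : q != y by apply/eqP => qy; apply: not_mu_xy; rewrite -qy.
have [w nu_qw mu_wy] := malcev_congruence_permute malcev_Alg Cmu Cnu mu_qx nu_xy.
have nu_qy : nu q y.
  case/or3P: (ord3_cases w qx qy xy) => /eqP w_eq; move: nu_qw mu_wy; rewrite w_eq.
  - by move=> _ mu_qy; case: not_mu_xy; exact: (congruence_trans Cmu mu_xq mu_qy).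
  - by move=> _ /not_mu_xy.
  - by [].
exact: (ord3_congruence_total qx qy xy).
Qed.

Lemma ord3_congruence_le : ~ is_zero_rel mu -> ~ is_one_rel nu ->
  forall x y, nu x y -> mu x y.
Proof.
move=> not_zero not_one x y nu_xy; apply: NNPP => not_mu_xy.
have [p [q [pq mu_pq]]] := nonzero_rel_pair (congruence_refl Cmu) not_zero.
have xy : x != y.
  by apply/eqP => xy; apply: not_mu_xy; rewrite xy; exact: congruence_refl Cmu y.
have nu_yx := congruence_sym Cnu nu_xy.
have not_mu_yx : ~ mu y x by move/(congruence_sym Cmu).
have mu_qp := congruence_sym Cmu mu_pq.
have qp : q != p by rewrite eq_sym.
case/or4P: (ord3_pairs_meet xy pq) => /eqP ?; subst; apply: not_one.
- exact: (ord3_congruence_cross_one qp mu_qp nu_xy not_mu_xy).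
- exact: (ord3_congruence_cross_one qp mu_qp nu_yx not_mu_yx).
- exact: (ord3_congruence_cross_one pq mu_pq nu_xy not_mu_xy).
- exact: (ord3_congruence_cross_one pq mu_pq nu_yx not_mu_yx).
Qed.

End ThreeElements.

Theorem lemma4p1 (Alg : algebra 'I_3) (mu : 'I_3 -> 'I_3 -> Prop) :
  malcev Alg ->
  congruence Alg mu -> ~ is_zero_rel mu -> ~ is_one_rel mu ->
  forall nu : 'I_3 -> 'I_3 -> Prop,
    congruence Alg nu -> ~ is_zero_rel nu -> ~ is_one_rel nu ->
    forall x y, nu x y <-> mu x y.
Proof.
move=> malcev_Alg Cmu mu_nonzero mu_nonone nu Cnu nu_nonzero nu_nonone x y.
split.
- exact: (ord3_congruence_le malcev_Alg Cmu Cnu mu_nonzero nu_nonone).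
- exact: (ord3_congruence_le malcev_Alg Cnu Cmu nu_nonzero mu_nonone).
Qed.
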